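(* Let $X$ and $Y$ be CW complexes and $k\ge 0$. Then the map $$\hat p_k:\hat G_k(X\times Y)=\bigcup_{i+j=k}G_iX\times G_jY\longrightarrow X\times Y,$$ given on $G_iX\times G_jY$ by $p_i^X\times p_j^Y$, is a Serre fibration.
   Context: For a path-connected space $X$, $p_0^X:G_0X\to X$ is the fibration obtained by converting the inclusion of a base point into a fibration (the path fibration). For fibrations $f_l:X_l\to B$, the fiberwise join $X_0*_B\cdots*_BX_n$ is the subspace of the join $X_0*\cdots*X_n$ consisting of formal combinations $t_0x_0+\cdots+t_nx_n$ ($t_l\ge0$, $\sum t_l=1$, terms with $t_l=0$ dropped) with all $f_l(x_l)$ equal, mapping to this common point. The $n$-th Ganea space $G_nX$ is the fiberwise join of $n+1$ copies of $G_0X$ over $X$, and $p_n^X:G_nX\to X$ is the $n$-th Ganea fibration; there are natural inclusions $G_0X\subset G_1X\subset\cdots$ with $p_n^X$ the restriction of $p_{n+1}^X$. Thus $\hat G_k(X\times Y)\subset G_kX\times G_kY$. A Serre fibration is a map with the homotopy lifting property for all CW complexes. *)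

From HB Require Import structures.
From mathcomp Require Import all_boot all_order all_algebra.
From mathcomp Require Import all_classical all_reals topology normedtype.
From mathcomp Require Import Rstruct Rstruct_topology.

Set Implicit Arguments.
Unset Strict Implicit.
Unset Printing Implicit Defensive.

Import Order.TTheory GRing.Theory Num.Theory.
Local Open Scope classical_set_scope.
Local Open Scope ring_scope.

Definition RR : realType := Rdefinitions.R.

Definition unit_itv : set RR := [set t | 0 <= t <= 1].

(* [set_type A] carries the genuine subspace topology (initial topology of
   the inclusion), see subtype_topology.v *)
Definition I01 : topologicalType := set_type unit_itv.

Lemma unit_itv0 : (0 : RR) \in unit_itv.
Proof. by apply/mem_set; rewrite /unit_itv /= lexx ler01. Qed.

Lemma unit_itv1 : (1 : RR) \in unit_itv.
Proof. by apply/mem_set; rewrite /unit_itv /= lexx ler01. Qed.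

Definition i0 : I01 := exist _ (0 : RR) unit_itv0.
Definition i1 : I01 := exist _ (1 : RR) unit_itv1.

Definition path_connected_space (X : topologicalType) : Prop :=
  forall x y : X, exists g : I01 -> X, [/\ continuous g, g i0 = x & g i1 = y].

(** * Euclidean disks and spheres D^n, int D^n, S^(n-1) in R^n = 'rV_n *)
Definition sqnorm n (v : 'rV[RR]_n) : RR := \sum_(i < n) (v ord0 i) ^+ 2.
Definition disk n : set 'rV[RR]_n := [set v | sqnorm v <= 1].
Definition open_disk n : set 'rV[RR]_n := [set v | sqnorm v < 1].
Definition sphere n : set 'rV[RR]_n := [set v | sqnorm v = 1].
Arguments disk : clear implicits.
Arguments open_disk : clear implicits.
Arguments sphere : clear implicits.

(** * CW complexes (classical definition via cells and characteristic maps):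
    a Hausdorff space X with a family of characteristic maps
    Phi_c : D^(dim c) -> X such that
    - each Phi_c is continuous,
    - the open cells e_c = Phi_c(int D^(dim c)) partition X,
    - Phi_c restricts to a homeomorphism from int D^(dim c) onto e_c,
    - (closure finiteness) Phi_c(S^(dim c - 1)) lies in finitely many cells
      of dimension < dim c,
    - (weak topology) A is closed iff every Phi_c^{-1}(A) is closed in D^(dim c). *)
Definition is_CW_complex (X : topologicalType) : Prop :=
  hausdorff_space X /\
  exists (C : Type) (dim : C -> nat) (Phi : forall c : C, 'rV[RR]_(dim c) -> X),
    let cell c := Phi c @` open_disk (dim c) in
    (forall c, {within disk (dim c), continuous (Phi c)}) /\
    (forall x : X, exists c, cell c x) /\
    (forall c c', c <> c' -> cell c `&` cell c' = set0) /\
    (forall c (u v : 'rV[RR]_(dim c)),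
        open_disk (dim c) u -> open_disk (dim c) v -> Phi c u = Phi c v -> u = v) /\
    (forall c (U : set 'rV[RR]_(dim c)), open U ->
        exists V : set X, open V /\ Phi c @` (U `&` open_disk (dim c)) = V `&` cell c) /\
    (forall c, exists F : set C, [/\ finite_set F,
        (forall c', F c' -> (dim c' < dim c)%N) &
        Phi c @` sphere (dim c) `<=` \bigcup_(c' in F) cell c']) /\
    (forall A : set X,
        closed A <-> forall c, closed (disk (dim c) `&` Phi c @^-1` A)).

Definition homotopy_lifting_wrt (K E B : topologicalType) (p : E -> B) : Prop :=
  forall (H : (K * I01)%type -> B) (f : K -> E),
    continuous H -> continuous f -> (forall k, p (f k) = H (k, i0)) ->
    exists G : (K * I01)%type -> E,
      [/\ continuous G, (forall z, p (G z) = H z) & (forall k, G (k, i0) = f k)].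

Definition serre_fibration (E B : topologicalType) (p : E -> B) : Prop :=
  continuous p /\
  forall K : topologicalType, is_CW_complex K -> homotopy_lifting_wrt K p.

Definition path_set (X : topologicalType) (x0 : X) : set {compact-open, I01 -> X} :=
  [set w | continuous (w : I01 -> X) /\ (w : I01 -> X) i0 = x0].

Definition G0 (X : topologicalType) (x0 : X) : topologicalType :=
  set_type (path_set x0).

Definition p0 (X : topologicalType) (x0 : X) (w : G0 x0) : X :=
  (set_val w : I01 -> X) i1.

(** * Joins of n+1 copies of a space P.
    A formal combination t_0 x_0 + ... + t_n x_n is encoded as a pair
    (t, w) with t : 'I_(n+1) -> R the barycentric coordinates and
    w : 'I_(n+1) -> option P, where w l = None exactly when t_l = 0
    (the term is dropped).  The join carries Milnor's (strong) topology:
    the coarsest topology making every t_l : join -> [0,1] continuous and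
    every x_l : t_l^{-1}(0,1] -> P continuous; it is generated by the
    subbasic sets {z | t_l z \in U} (U open in R) and
    {z | w_l z = Some x, x \in V} (V open in P). *)
Record join_carrier (n : nat) (P : Type) := JoinPt {
  jcoord : 'I_n.+1 -> RR;
  jpoint : 'I_n.+1 -> option P }.

HB.instance Definition _ n P := gen_eqMixin (join_carrier n P).
HB.instance Definition _ n P := gen_choiceMixin (join_carrier n P).

Definition join_subbase_index (n : nat) (P : Type) : pointedType :=
  option ('I_n.+1 * (set RR + set P)).

Definition join_subbase_dom (n : nat) (P : topologicalType) :
    set (join_subbase_index n P) :=
  fun i => match i with
           | None => True
           | Some (_, inl U) => open U
           | Some (_, inr V) => open V
           end.

Definition join_subbase (n : nat) (P : topologicalType)
    (i : join_subbase_index n P) : set (join_carrier n P) :=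
  match i with
  | None => setT
  | Some (l, inl U) => [set z | U (jcoord z l)]
  | Some (l, inr V) => [set z | exists x, jpoint z l = Some x /\ V x]
  end.

HB.instance Definition _ n (P : topologicalType) :=
  isSubBaseTopological.Build (join_carrier n P)
    (@join_subbase_dom n P) (@join_subbase n P).

Definition fjoin_set (n : nat) (P B : Type) (q : P -> B) : set (join_carrier n P) :=
  [set z | [/\ (forall l, 0 <= jcoord z l),
              \sum_(l < n.+1) jcoord z l = 1,
              (forall l, jcoord z l = 0 <-> jpoint z l = None) &
              (forall l l' x x', jpoint z l = Some x -> jpoint z l' = Some x' -> q x = q x')]].

Definition ganea_set (n : nat) (X : topologicalType) (x0 : X) :
    set (join_carrier n (G0 x0)) :=
  @fjoin_set n _ _ (@p0 X x0).
Arguments ganea_set n {X} x0.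

Definition Ganea (n : nat) (X : topologicalType) (x0 : X) : topologicalType :=
  set_type (ganea_set n x0).

(* the common image in X of the points of the combination
   (x0 is only a dummy default: the set below is always a singleton) *)
Definition ganea_proj (n : nat) (X : topologicalType) (x0 : X)
    (z : Ganea n x0) : X :=
  xget x0 [set x | exists l w, jpoint (set_val z) l = Some w /\ p0 w = x].

(** The natural inclusion G_i X \subset G_n X (i <= n) identifies G_i X with
    the combinations whose coordinates t_l vanish for l > i. *)
Definition in_ganea_level (i n : nat) (X : topologicalType) (x0 : X)
    (z : Ganea n x0) : Prop :=
  forall l : 'I_n.+1, (i < l)%N -> jcoord (set_val z) l = 0.

Definition ganea_hat_set (k : nat) (X Y : topologicalType) (x0 : X) (y0 : Y) :
    set (Ganea k x0 * Ganea k y0)%type :=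
  [set ab | exists i j, [/\ (i + j)%N = k, in_ganea_level i ab.1 &
                            in_ganea_level j ab.2]].
Arguments ganea_hat_set k {X Y} x0 y0.

Definition ganea_hat (k : nat) (X Y : topologicalType) (x0 : X) (y0 : Y) :
    topologicalType := set_type (ganea_hat_set k x0 y0).

Definition ganea_hat_proj (k : nat) (X Y : topologicalType) (x0 : X) (y0 : Y)
    (ab : ganea_hat k x0 y0) : (X * Y)%type :=
  (ganea_proj (set_val ab).1, ganea_proj (set_val ab).2).

(* The Ganea fibration p_n : G_n X -> X is a Hurewicz fibration whose lifts
   never change barycentric coordinates.  Given H : K x I -> X and a lift f of
   H(-, 0), keep the coordinates t_l of f(k) and replace each path w_l, which
   ends at p_n(f k) = H(k, 0), by w_l followed by H(k, -) on [0, s].  This is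
   continuous in the compact-open topology by the exponential law for the
   compact regular interval I.  Since coordinates are preserved, a lift of a
   map into G_i X stays in G_i X. *)

From HB Require Import structures.
From mathcomp Require Import all_boot all_order all_algebra.
From mathcomp Require Import all_classical all_reals topology normedtype.
From mathcomp Require Import Rstruct Rstruct_topology.
From mathcomp Require Import finmap lra.

Set Implicit Arguments.
Unset Strict Implicit.
Unset Printing Implicit Defensive.

Import Order.TTheory GRing.Theory Num.Theory.
Local Open Scope classical_set_scope.
Local Open Scope ring_scope.

Lemma continuous_set_val {T : topologicalType} (A : set T) :
  continuous (set_val : set_type A -> T).
Proof. exact: initial_continuous. Qed.

Lemma continuous_set_val_comp {S T : topologicalType} (A : set T) (f : S -> set_type A) :
  continuous f -> continuous (fun x => set_val (f x)).
Proof.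
move=> cf x; apply: (@continuous_comp _ _ _ f set_val); first exact: cf.
exact: continuous_set_val.
Qed.

Section Products.
Context {A B C : topologicalType}.

Lemma continuous_at_pair (f : A -> B) (g : A -> C) (a : A) :
  {for a, continuous f} -> {for a, continuous g} ->
  {for a, continuous (fun x => (f x, g x))}.
Proof. exact: cvg_pair. Qed.

Lemma continuous_at_comp_fst (g : A -> C) (a : A) (b : B) :
  {for a, continuous g} -> {for (a, b), continuous (fun p : A * B => g p.1)}.
Proof. by move=> cg; apply: (@continuous_comp _ _ _ fst g) => //; exact: cvg_fst. Qed.

Lemma continuous_at_comp_snd (g : B -> C) (a : A) (b : B) :
  {for b, continuous g} -> {for (a, b), continuous (fun p : A * B => g p.2)}.
Proof. by move=> cg; apply: (@continuous_comp _ _ _ snd g) => //; exact: cvg_snd. Qed.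

Lemma continuous_fst_comp {T : topologicalType} (g : T -> A * B) :
  continuous g -> continuous (fun t => (g t).1).
Proof.
by move=> cg t; apply: (@continuous_comp _ _ _ g fst); [exact: cg | exact: cvg_fst].
Qed.

Lemma continuous_snd_comp {T : topologicalType} (g : T -> A * B) :
  continuous g -> continuous (fun t => (g t).2).
Proof.
by move=> cg t; apply: (@continuous_comp _ _ _ g snd); [exact: cg | exact: cvg_snd].
Qed.

Lemma near_fst (Q : A -> Prop) (a : A) (b : B) :
  (\forall x \near a, Q x) -> \forall p \near (a, b), Q p.1.
Proof. exact: cvg_fst. Qed.

End Products.

Lemma continuous_at_comp_initial {Y : choiceType} {Z T : topologicalType}
    (v : Y -> T) (f : Z -> initial_topology v) (z : Z) :
  {for z, continuous (v \o f)} -> {for z, continuous f}.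
Proof.
move=> cf U [? /= [[W oW <-]]] /= Wfz /filterS; apply; apply: cf.
exact: open_nbhs_nbhs.
Qed.

Lemma continuous_at_near_eq {A B : topologicalType} (f g : A -> B) (a : A) :
  (\forall x \near a, f x = g x) -> {for a, continuous g} -> {for a, continuous f}.
Proof.
move=> fg cg; have fga : f a = g a := nbhs_singleton fg.
apply: cvg_trans (near_eq_cvg (f := g) _) _; first by near do apply/esym.
by rewrite fga; exact: cg.
Unshelve. all: by end_near. Qed.

Lemma continuous_at_paste_le (Z T : topologicalType) (c : Z -> RR)
    (g h : Z -> T) (z0 : Z) :
  {for z0, continuous c} -> {for z0, continuous g} -> {for z0, continuous h} ->
  (c z0 = 1 -> g z0 = h z0) ->
  {for z0, continuous (fun z => if c z <= 1 then g z else h z)}.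
Proof.
move=> cc cg ch gh N; case: (ltgtP (c z0) 1) => cz0 Nz0; rewrite nbhs_simpl /=.
- near=> z => /=; have /ltW -> : c z < 1 by near: z; exact: cvgr_lt cz0.
  by near: z; exact: cg.
- near=> z => /=; have /lt_geF -> : 1 < c z by near: z; exact: cvgr_gt cz0.
  by near: z; exact: ch.
- near=> z => /=; case: ifP => _; near: z; first exact: cg.
  by apply: ch; rewrite -gh.
Unshelve. all: by end_near. Qed.

Section PointwiseCurrying.
Context {U V W : topologicalType}.

Lemma curry_continuous_at (f : U * V -> W) (u : U) :
  (forall v, {for (u, v), continuous f}) ->
  {for u, continuous ((fun a b => f (a, b)) : U -> {compact-open, V -> W})}.
Proof.
move=> cf; apply/compact_open_cvgP => K O /= cptK oO fKO.
near=> z => w /= [+ + <-]; near: z.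
move/compact_near_coveringP/near_covering_withinP : cptK; apply.
move=> v Kv; have [[P Q] [Pu Qv] PQfO] : nbhs (u, v) (f @^-1` O).
  by apply: cf; move: oO; rewrite openE; apply; apply: fKO; exists v.
by exists (Q, P) => // -[b a] /= [Qb Pa] Kb; exact: PQfO.
Unshelve. all: by end_near. Qed.

Lemma uncurry_continuous_at (f : U -> {compact-open, V -> W}) (u : U) (v : V) :
  compact [set: V] -> @regular_space V ->
  {for u, continuous f} -> {for v, continuous (f u : V -> W)} ->
  {for (u, v), continuous (fun p : U * V => (f p.1 : V -> W) p.2)}.
Proof.
move=> cptV regV cf cfu D; rewrite /= nbhsE => -[O [oO Ofuv]] /filterS.
apply; have [R Rv RO] : exists2 R, nbhs v R & forall z, closure R z -> O (f u z).
  have [] := regV v ((f u : V -> W) @^-1` O).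
    by apply: cfu; exact: open_nbhs_nbhs.
  by move=> R ? ?; exists R.
exists (f @^-1` [set g : {compact-open, V -> W} | g @` closure R `<=` O], closure R).
  split; last by apply: filterS Rv; exact: subset_closure.
  apply/cf/open_nbhs_nbhs; split; last by move=> _ [x + <-]; exact: RO.
  apply: compact_open_open => //; rewrite -[closure R]setTI.
  by apply: compact_closedI => //; exact: closed_closure.
by case=> a r /= [fRO Rr]; apply: fRO; exists r.
Qed.

End PointwiseCurrying.

Lemma I01_ge0 (v : I01) : 0 <= set_val v.
Proof. by have /andP[] := set_valP v. Qed.

Lemma I01_le1 (v : I01) : set_val v <= 1.
Proof. by have /andP[] := set_valP v. Qed.

Definition clamp (r : RR) : RR := Num.max 0 (Num.min r 1).

Lemma clamp_in_unit_itv (r : RR) : clamp r \in unit_itv.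
Proof.
apply/mem_set; rewrite /unit_itv /= /clamp le_max lexx /=.
by rewrite ge_max ler01 ge_min lexx orbT.
Qed.

Definition clamp01 (r : RR) : I01 := exist _ (clamp r) (clamp_in_unit_itv r).

Lemma val_clamp01 (r : RR) : 0 <= r <= 1 -> set_val (clamp01 r) = r.
Proof. by case/andP=> r0 r1; rewrite set_valE /= /clamp (min_l r1) (max_r r0). Qed.

Lemma clamp01_set_val (v : I01) : clamp01 (set_val v) = v.
Proof. by apply: val_inj; apply: val_clamp01; rewrite I01_ge0 I01_le1. Qed.

Lemma clamp01_0 : clamp01 0 = i0.
Proof. by apply: val_inj; apply: val_clamp01; rewrite lexx ler01. Qed.

Lemma clamp01_1 : clamp01 1 = i1.
Proof. by apply: val_inj; apply: val_clamp01; rewrite lexx ler01. Qed.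

Lemma continuous_clamp01 : continuous clamp01.
Proof.
move=> r; apply: continuous_at_comp_initial.
have cmin : {for r, continuous ((id : RR -> RR^o) \min cst 1)}.
  by apply: continuous_min; [exact: cvg_id | exact: cvg_cst].
have c0 : {for r, continuous (cst 0 : RR -> RR^o)} by exact: cvg_cst.
exact: (continuous_max c0 cmin).
Qed.

Lemma compact_I01 : compact [set: I01].
Proof.
suff <- : clamp01 @` `[0, 1] = [set: I01].
  apply: continuous_compact; last exact: segment_compact.
  by apply: continuous_subspaceT => r; exact: continuous_clamp01.
apply/seteqP; split=> // v _; exists (set_val v); last exact: clamp01_set_val.
by rewrite /= in_itv /= I01_ge0 I01_le1.
Qed.

Lemma regular_I01 : @regular_space I01.
Proof. exact: uniform_regular. Qed.

Section ExtendPath.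
Context {X : topologicalType}.

(* [w] followed by [h] restricted to [0, s], run on [0, 1] at constant speed *)
Definition extend_path (w h : I01 -> X) (s : RR) (u : I01) : X :=
  let t := set_val u * (1 + s) in
  if t <= 1 then w (clamp01 t) else h (clamp01 (t - 1)).

Lemma extend_path_i0 (w h : I01 -> X) (s : RR) : extend_path w h s i0 = w i0.
Proof. by rewrite /extend_path /= mul0r ler01 clamp01_0. Qed.

Lemma extend_path_i1 (w h : I01 -> X) (s : I01) :
  w i1 = h i0 -> extend_path w h (set_val s) i1 = h s.
Proof.
rewrite /extend_path /= mul1r => wh; case: ifPn => [s_le0|_].
  have s0 : set_val s = 0 by have := I01_ge0 s; lra.
  by rewrite s0 addr0 clamp01_1 wh; congr h; exact: val_inj.
by rewrite addrC addKr clamp01_set_val.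
Qed.

Lemma extend_path0 (w h : I01 -> X) : extend_path w h 0 = w.
Proof.
by apply: funext => u; rewrite /extend_path addr0 mulr1 I01_le1 clamp01_set_val.
Qed.

Lemma extend_path_continuous_at {A : topologicalType} (w h : A -> I01 -> X)
    (s : A -> RR) (a0 : A) (u0 : I01) :
  (forall v, {for (a0, v), continuous (fun p : A * I01 => w p.1 p.2)}) ->
  (forall v, {for (a0, v), continuous (fun p : A * I01 => h p.1 p.2)}) ->
  {for a0, continuous s} -> w a0 i1 = h a0 i0 ->
  {for (a0, u0), continuous
    (fun p : A * I01 => extend_path (w p.1) (h p.1) (s p.1) p.2)}.
Proof.
move=> cw ch cs wh; set t := fun p : A * I01 => set_val p.2 * (1 + s p.1).
have ct : {for (a0, u0), continuous t}.
  have cu : {for (a0, u0), continuous (fun p : A * I01 => set_val p.2)}.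
    exact/continuous_at_comp_snd/continuous_set_val.
  have cs1 : {for (a0, u0), continuous (fun p : A * I01 => s p.1)}.
    exact: continuous_at_comp_fst.
  apply: (@cvgM RR _ _ _ (fun p => set_val p.2) (fun p => 1 + s p.1)) => //.
  by apply: (@cvgD RR RR^o _ _ _ (cst 1) (fun p => s p.1)) => //; exact: cvg_cst.
have reparam (g : A -> I01 -> X) (r : A * I01 -> RR) :
    (forall v, {for (a0, v), continuous (fun p : A * I01 => g p.1 p.2)}) ->
    {for (a0, u0), continuous r} ->
    {for (a0, u0), continuous (fun p : A * I01 => g p.1 (clamp01 (r p)))}.
  move=> cg cr; apply: (@continuous_comp _ _ _ (fun p => (p.1, clamp01 (r p)))
    (fun q : A * I01 => g q.1 q.2)); last exact: cg.
  apply: continuous_at_pair; first exact: cvg_fst.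
  by apply: (@continuous_comp _ _ _ r clamp01) => //; exact: continuous_clamp01.
apply: continuous_at_paste_le => //.
- exact: reparam.
- apply: reparam => //.
  by apply: (@cvgB RR RR^o _ _ _ t (cst 1)) => //; exact: cvg_cst.
- by move=> /= ->; rewrite subrr clamp01_1 clamp01_0.
Qed.

Lemma continuous_extend_path (w h : I01 -> X) (s : RR) :
  continuous w -> continuous h -> w i1 = h i0 -> continuous (extend_path w h s).
Proof.
move=> cw ch wh u.
have cext := @extend_path_continuous_at I01 (fun=> w) (fun=> h) (fun=> s) u u.
apply: (@continuous_comp _ _ _ (fun v => (u, v))
  (fun p : I01 * I01 => extend_path w h s p.2)).
  by apply: continuous_at_pair; [exact: cst_continuous | exact: cvg_id].
apply: cext => [v|v||//]; [exact/continuous_at_comp_snd/cw |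
  exact/continuous_at_comp_snd/ch | exact: cst_continuous].
Qed.

End ExtendPath.

Section JoinTopology.
Context (n : nat) (P : topologicalType).
Implicit Types (z : join_carrier n P) (l : 'I_n.+1).

Lemma open_join_subbase (i : join_subbase_index n P) :
  join_subbase_dom i -> open (join_subbase i).
Proof.
move=> Di; exists [set join_subbase i]; last first.
  by rewrite predeqE => z; split=> [[_ ->]|] //; exists (join_subbase i).
move=> _ ->; exists [fset i]%fset.
  by move=> j; rewrite /= !inE => /eqP ->; exact/mem_set.
by rewrite predeqE => z; split=> [|? ?]; [apply|]; rewrite /= inE // => /eqP ->.
Qed.

Lemma join_cvg (F : set_system (join_carrier n P)) z : Filter F ->
  (forall i, join_subbase_dom i -> join_subbase i z -> F (join_subbase i)) ->
  F --> z.
Proof.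
move=> FF Fsub A; rewrite nbhsE => -[_ [[B sB <-] [C BC Cz] sUBA]].
rewrite nbhs_filterE; apply: filterS sUBA _; apply: (@filterS _ _ _ C).
  by move=> ? ?; exists C.
have /sB [D sD IDeC] := BC; rewrite -IDeC; apply: filter_bigI => E DE.
have /sD /set_mem DE' := DE.
by apply: Fsub => //; move: Cz; rewrite -IDeC => /(_ _ DE).
Qed.

Lemma continuous_jcoord l : continuous (fun z => jcoord z l).
Proof.
move=> z U; rewrite nbhsE => -[V [oV Vz VU]].
apply: (@filterS _ _ _ (join_subbase (Some (l, inl V)))); first by move=> y /VU.
by apply: open_nbhs_nbhs; split; [exact: open_join_subbase | exact: Vz].
Qed.

Lemma near_jpoint z0 l x0 (V : set P) : jpoint z0 l = Some x0 -> open V -> V x0 ->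
  \forall z \near z0, exists2 x, jpoint z l = Some x & V x.
Proof.
move=> z0l oV Vx0; apply: (@filterS _ _ _ (join_subbase (Some (l, inr V)))).
  by move=> z /= [x []]; exists x.
by apply: open_nbhs_nbhs; split; [exact: open_join_subbase | exists x0].
Qed.

Lemma continuous_at_jpoint (d : P) z0 l x0 : jpoint z0 l = Some x0 ->
  {for z0, continuous (fun z => odflt d (jpoint z l))}.
Proof.
move=> z0l N; rewrite /= z0l nbhsE => -[V [oV Vx0 VN]].
by apply: filterS (near_jpoint z0l oV Vx0) => z /= [x -> /VN].
Qed.

Lemma continuous_at_join {A : topologicalType} (F : A -> join_carrier n P) (a0 : A) :
  (forall l, {for a0, continuous (fun a => jcoord (F a) l)}) ->
  (forall l x0, jpoint (F a0) l = Some x0 ->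
     exists2 p : A -> P, {for a0, continuous p} &
       \forall a \near a0, jpoint (F a) l = Some (p a)) ->
  {for a0, continuous F}.
Proof.
move=> ccoord cpoint; apply: join_cvg => -[[l [U|V]]|] //= DU.
- by move=> Ua0; apply: ccoord; apply: open_nbhs_nbhs.
- move=> [x0 [a0l Vx0]]; have [p cp nearp] := cpoint l x0 a0l.
  have px0 : p a0 = x0 by apply: Some_inj; rewrite -(nbhs_singleton nearp).
  have nearV : \forall a \near a0, V (p a).
    by apply: cp; apply: open_nbhs_nbhs; rewrite px0.
  by near=> a; exists (p a); split; near: a.
- by move=> _; exact: filterT.
Unshelve. all: by end_near. Qed.

End JoinTopology.

Section PathSpace.
Context {X : topologicalType} (x0 : X).

Lemma continuous_G0 (w : G0 x0) : continuous (set_val w : I01 -> X).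
Proof. by have [] := set_valP w. Qed.

Lemma G0_i0 (w : G0 x0) : (set_val w : I01 -> X) i0 = x0.
Proof. by have [] := set_valP w. Qed.

Lemma continuous_p0 : continuous (@p0 X x0).
Proof.
move=> w O; rewrite nbhsE => -[U [oU Uw UO]].
pose at_i1_in_U := [set g : {compact-open, I01 -> X} | g @` [set i1] `<=` U].
apply: (@filterS _ _ _ (set_val @^-1` at_i1_in_U)).
  by move=> v /= Uv; apply/UO/Uv; exists i1.
apply: open_nbhs_nbhs; split; last by move=> _ [_ -> <-].
exists at_i1_in_U => //.
by apply: compact_open_open => //; exact: compact_set1.
Qed.

Lemma path_set_const : path_set x0 ((fun=> x0) : {compact-open, I01 -> X}).
Proof. by split=> //; exact: cst_continuous. Qed.

(* paths failing [path_set] are sent to the constant path *)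
Definition to_G0 (g : I01 -> X) : G0 x0 :=
  if pselect (path_set x0 (g : {compact-open, I01 -> X})) is left gP
  then exist _ g (mem_set gP) else exist _ (fun=> x0) (mem_set path_set_const).

Lemma val_to_G0 (g : I01 -> X) : path_set x0 (g : {compact-open, I01 -> X}) ->
  set_val (to_G0 g) = g.
Proof. by rewrite /to_G0; case: pselect. Qed.

End PathSpace.

Section GaneaProjection.
Context {X : topologicalType} (x0 : X) (n : nat).
Implicit Types z : Ganea n x0.

Lemma ganea_projE z l w : jpoint (set_val z) l = Some w -> ganea_proj z = p0 w.
Proof.
move=> zl; have [_ _ _ fibre] := set_valP z; rewrite /ganea_proj.
case: xgetP => [y -> [l' [w' [zl' <-]]]|none]; first exact: fibre zl' zl.
by exfalso; apply: (none (p0 w)); exists l, w.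
Qed.

Lemma ganea_jpoint_exists z : exists l w, jpoint (set_val z) l = Some w.
Proof.
have [_ sum1 coord0 _] := set_valP z; apply: contrapT => none.
suff : \sum_(l < n.+1) jcoord (set_val z) l = 0.
  by rewrite sum1 => /eqP; rewrite oner_eq0.
apply: big1 => l _; apply/coord0; case zl: (jpoint _ l) => [w|] //.
by exfalso; apply: none; exists l, w.
Qed.

Lemma continuous_ganea_proj : continuous (@ganea_proj n X x0).
Proof.
move=> z0; have [l [w0 z0l]] := ganea_jpoint_exists z0.
pose jp z := odflt w0 (jpoint (set_val z) l).
apply: (@continuous_at_near_eq _ _ (@ganea_proj n X x0) (@p0 X x0 \o jp)).
  have : \forall z \near z0, exists2 w, jpoint (set_val z) l = Some w & [set: G0 x0] w.
    exact: continuous_set_val (near_jpoint z0l openT I).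
  by apply: filterS => z [w zl _]; rewrite /jp /= zl (ganea_projE zl).
apply: (@continuous_comp _ _ _ jp (@p0 X x0)); last exact: continuous_p0.
apply: (@continuous_comp _ _ _ set_val (fun y => odflt w0 (jpoint y l))).
  exact: continuous_set_val.
exact: continuous_at_jpoint z0l.
Qed.

End GaneaProjection.

Section LiftPath.
Context {X : topologicalType} (x0 : X) {K : topologicalType} (H : K * I01 -> X).
Hypothesis cH : continuous H.

Definition lift_path (ks : K * I01) (w : G0 x0) : G0 x0 :=
  to_G0 x0 (extend_path (set_val w) (fun t => H (ks.1, t)) (set_val ks.2)).

Lemma continuous_slice (k : K) : continuous (fun t => H (k, t)).
Proof.
move=> t; apply: (@continuous_comp _ _ _ (fun t => (k, t)) H); last exact: cH.
by apply: continuous_at_pair; [exact: cst_continuous | exact: cvg_id].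
Qed.

Lemma lift_pathE (ks : K * I01) (w : G0 x0) : p0 w = H (ks.1, i0) ->
  set_val (lift_path ks w) =
    extend_path (set_val w) (fun t => H (ks.1, t)) (set_val ks.2).
Proof.
move=> wH; apply: val_to_G0; split; last by rewrite extend_path_i0 G0_i0.
by apply: continuous_extend_path;
  [exact: continuous_G0 | exact: continuous_slice | exact: wH].
Qed.

Lemma p0_lift_path (ks : K * I01) (w : G0 x0) :
  p0 w = H (ks.1, i0) -> p0 (lift_path ks w) = H ks.
Proof.
case: ks => k s wH; rewrite {1}/p0.
by rewrite (lift_pathE wH) (extend_path_i1 s wH).
Qed.

Lemma lift_path_i0 (k : K) (w : G0 x0) :
  p0 w = H (k, i0) -> lift_path (k, i0) w = w.
Proof.
move=> wH; apply: val_inj; rewrite -!set_valE (lift_pathE (ks := (k, i0)) wH).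
by rewrite extend_path0.
Qed.

Lemma lift_path_continuous_at (w : K -> G0 x0) (k0 : K) (s0 : I01) :
  {for k0, continuous w} -> (\forall k \near k0, p0 (w k) = H (k, i0)) ->
  {for (k0, s0), continuous (fun ks => lift_path ks (w ks.1))}.
Proof.
move=> cw wH; apply: continuous_at_comp_initial.
pose ext (p : K * I01 * I01) := extend_path (set_val (w p.1.1))
  (fun t => H (p.1.1, t)) (set_val p.1.2) p.2.
pose phi ks : {compact-open, I01 -> X} := fun u => ext (ks, u).
apply: (@continuous_at_near_eq _ _ _ phi).
  by near=> ks; rewrite /= lift_pathE //; near: ks; exact: near_fst s0 wH.
have wH0 : p0 (w k0) = H (k0, i0) := nbhs_singleton wH.
have reindex (g : K * I01 -> X) v : {for (k0, v), continuous g} ->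
    {for (k0, s0, v), continuous (fun p : K * I01 * I01 => g (p.1.1, p.2))}.
  move=> cg; apply: (@continuous_comp _ _ _ (fun p : K * I01 * I01 => (p.1.1, p.2)) g
    (k0, s0, v)) => //.
  apply: continuous_at_pair; last exact: cvg_snd.
  by apply: (@continuous_comp _ _ _ fst fst); exact: cvg_fst.
apply: curry_continuous_at => u.
apply: (@extend_path_continuous_at _ _ (fun a => set_val (w a.1)) (fun a t => H (a.1, t))
  (fun a => set_val a.2)) => // v.
- have cw' : {for k0, continuous (fun k => set_val (w k) : {compact-open, I01 -> X})}.
    by apply: (@continuous_comp _ _ _ w set_val) => //; exact: continuous_set_val.
  apply: (reindex (fun q => set_val (w q.1) q.2)).
  exact: uncurry_continuous_at compact_I01 regular_I01 cw' (@continuous_G0 _ _ (w k0) v).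
- exact: reindex H v (@cH (k0, v)).
- exact/continuous_at_comp_snd/continuous_set_val.
Unshelve. all: by end_near. Qed.

End LiftPath.

Section GaneaLift.
Context {X : topologicalType} (x0 : X) (n : nat) {K : topologicalType}.
Context (H : K * I01 -> X) (f : K -> Ganea n x0).
Hypotheses (cH : continuous H) (cf : continuous f)
  (fH : forall k, ganea_proj (f k) = H (k, i0)).

Lemma p0_jpoint_f k l w : jpoint (set_val (f k)) l = Some w -> p0 w = H (k, i0).
Proof. by move=> fkl; rewrite -(ganea_projE fkl) fH. Qed.

Definition ganea_lift_point (ks : K * I01) : join_carrier n (G0 x0) :=
  JoinPt (jcoord (set_val (f ks.1)))
    (fun l => omap (lift_path H ks) (jpoint (set_val (f ks.1)) l)).

Lemma ganea_lift_pointP ks : ganea_set n x0 (ganea_lift_point ks).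
Proof.
case: ks => k s.
have [coord_ge0 sum1 coord0 _] : ganea_set n x0 (set_val (f k)) := set_valP (f k).
rewrite /ganea_lift_point; split=> //= [l|l l' x x'].
  by rewrite coord0; case: (jpoint _ l).
case fkl: (jpoint _ l) => [w|] // [<-]; case fkl': (jpoint _ l') => [w'|] // [<-].
by rewrite !p0_lift_path ?(p0_jpoint_f fkl) ?(p0_jpoint_f fkl').
Qed.

Definition ganea_lift (ks : K * I01) : Ganea n x0 :=
  exist _ (ganea_lift_point ks) (mem_set (ganea_lift_pointP ks)).

Lemma ganea_proj_lift ks : ganea_proj (ganea_lift ks) = H ks.
Proof.
have [l [w fkl]] := ganea_jpoint_exists (f ks.1).
have liftl : jpoint (set_val (ganea_lift ks)) l = Some (lift_path H ks w).
  by rewrite /= fkl.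
by rewrite (ganea_projE liftl) p0_lift_path // (p0_jpoint_f fkl).
Qed.

Lemma ganea_lift_i0 k : ganea_lift (k, i0) = f k.
Proof.
apply: val_inj; change (ganea_lift_point (k, i0) = set_val (f k)).
rewrite /ganea_lift_point; case: (set_val (f k)) (@p0_jpoint_f k) => c p /= pH.
congr JoinPt; apply: funext => l; case pl: (p l) => [w|] //=.
by rewrite lift_path_i0 // (pH l w).
Qed.

Lemma ganea_lift_level i ks :
  in_ganea_level i (f ks.1) -> in_ganea_level i (ganea_lift ks).
Proof. by []. Qed.

Lemma continuous_ganea_lift : continuous ganea_lift.
Proof.
have cf_val := continuous_set_val_comp cf.
move=> [k0 s0]; apply: continuous_at_comp_initial; apply: continuous_at_join => l.
  apply: (continuous_at_comp_fst (g := fun k => jcoord (set_val (f k)) l)).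
  apply: (@continuous_comp _ _ _ (fun k => set_val (f k)) (fun z => jcoord z l)).
    exact: cf_val.
  exact: continuous_jcoord.
rewrite /= => v; case fk0l: (jpoint _ l) => [w0|] //= _.
pose w k := odflt w0 (jpoint (set_val (f k)) l).
have near_some : \forall k \near k0, jpoint (set_val (f k)) l = Some (w k).
  have : \forall k \near k0,
      exists2 w', jpoint (set_val (f k)) l = Some w' & [set: G0 x0] w'.
    exact: cf_val (near_jpoint fk0l openT I).
  by apply: filterS => k [w' fkl _]; rewrite /w fkl.
exists (fun ks => lift_path H ks (w ks.1)).
  apply: (lift_path_continuous_at cH).
    rewrite /w; apply: (@continuous_comp _ _ _ (fun k => set_val (f k))
      (fun z => odflt w0 (jpoint z l))).
      exact: cf_val.
    exact: continuous_at_jpoint fk0l.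
  by apply: filterS near_some => k; exact: p0_jpoint_f.
by apply: filterS (near_fst s0 near_some) => ks /= ->.
Qed.

End GaneaLift.

Lemma ganea_level_homotopy_lifting {X : topologicalType} (x0 : X) (n : nat)
    {K : topologicalType} (H : K * I01 -> X) (f : K -> Ganea n x0) :
  continuous H -> continuous f -> (forall k, ganea_proj (f k) = H (k, i0)) ->
  exists G : K * I01 -> Ganea n x0,
    [/\ continuous G, (forall z, ganea_proj (G z) = H z),
        (forall k, G (k, i0) = f k) &
        (forall i z, in_ganea_level i (f z.1) -> in_ganea_level i (G z))].
Proof.
move=> cH cf fH; exists (ganea_lift cH fH); split.
- exact: continuous_ganea_lift.
- exact: ganea_proj_lift.
- exact: ganea_lift_i0.
- exact: ganea_lift_level.
Qed.

Section GaneaHat.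
Context {X Y : topologicalType} (x0 : X) (y0 : Y) (k : nat).

Lemma continuous_ganea_hat_proj : continuous (@ganea_hat_proj k X Y x0 y0).
Proof.
have cval := @continuous_set_val _ (ganea_hat_set k x0 y0).
move=> ab; apply: (@continuous_at_pair _ _ _ (fun ab => ganea_proj (set_val ab).1)
  (fun ab => ganea_proj (set_val ab).2)).
  apply: (@continuous_comp _ _ _ (fun ab : ganea_hat k x0 y0 => (set_val ab).1)
    (@ganea_proj k X x0)).
    exact: continuous_fst_comp.
  exact: continuous_ganea_proj.
apply: (@continuous_comp _ _ _ (fun ab : ganea_hat k x0 y0 => (set_val ab).2)
  (@ganea_proj k Y y0)).
  exact: continuous_snd_comp.
exact: continuous_ganea_proj.
Qed.

Lemma ganea_hat_homotopy_lifting (K : topologicalType) :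
  homotopy_lifting_wrt K (@ganea_hat_proj k X Y x0 y0).
Proof.
move=> H f cH cf fH.
have cf_val := continuous_set_val_comp cf.
have [G1 [cG1 G1H G1f G1level]] := ganea_level_homotopy_lifting
  (continuous_fst_comp cH) (continuous_fst_comp cf_val) (fun z => congr1 fst (fH z)).
have [G2 [cG2 G2H G2f G2level]] := ganea_level_homotopy_lifting
  (continuous_snd_comp cH) (continuous_snd_comp cf_val) (fun z => congr1 snd (fH z)).
have G12_hat z : ganea_hat_set k x0 y0 (G1 z, G2 z).
  have [i [j [ijk fi fj]]] := set_valP (f z.1).
  by exists i, j; split; [exact: ijk | exact: G1level | exact: G2level].
exists (fun z => exist _ (G1 z, G2 z) (mem_set (G12_hat z))); split.
- move=> z; apply: continuous_at_comp_initial.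
  exact: continuous_at_pair (cG1 z) (cG2 z).
- by move=> z; rewrite /ganea_hat_proj /= G1H G2H; case: (H z).
- move=> z; apply: val_inj; rewrite /= G1f G2f.
  exact: (esym (surjective_pairing (set_val (f z)))).
Qed.

End GaneaHat.

Theorem mainTheorem7 (X Y : topologicalType) (x0 : X) (y0 : Y) (k : nat) :
  is_CW_complex X -> is_CW_complex Y ->
  path_connected_space X -> path_connected_space Y ->
  serre_fibration (@ganea_hat_proj k X Y x0 y0).
Proof.
move=> _ _ _ _; split; first exact: continuous_ganea_hat_proj.
by move=> K _; exact: ganea_hat_homotopy_lifting.
Qed.
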